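(* Let $\mathcal{D}\subset\mathbb{R}^N$ be open, bounded, connected. If $y_0\in\partial\mathcal{D}$ is not walk-regular, then there exists a continuous function $F:\partial\mathcal{D}\to\mathbb{R}$ such that the functions $u^\epsilon(x)=\mathbb{E}[F\circ X^{\epsilon,x}]$ satisfy $\limsup_{x\to y_0,\,\epsilon\to0}u^\epsilon(x)\ne F(y_0)$.
   Context: Probability space: $\Omega_1=B_1(0)\subset\mathbb{R}^N$ with Borel $\sigma$-algebra and normalised Lebesgue measure; $(\Omega,\mathcal{F},\mathbb{P})$ is the countable product $\Omega=(\Omega_1)^{\mathbb{N}}$, $\omega=\{w_i\}_{i\ge1}$. The $\epsilon$-ball walk started at $x\in\mathcal{D}$: $X_0^{\epsilon,x}\equiv x$, $X_n^{\epsilon,x}=X_{n-1}^{\epsilon,x}+\big(\epsilon\wedge\operatorname{dist}(X_{n-1}^{\epsilon,x},\partial\mathcal{D})\big)w_n$ for $n\ge1$; it converges $\mathbb{P}$-a.s. to a random variable $X^{\epsilon,x}:\Omega\to\partial\mathcal{D}$. A point $y_0\in\partial\mathcal{D}$ is walk-regular if for every $\eta,\delta>0$ there exist $\hat\delta\in(0,\delta)$ and $\hat\epsilon\in(0,1)$ such that $\mathbb{P}(X^{\epsilon,x_0}\in B_\delta(y_0))\ge1-\eta$ for all $\epsilon\in(0,\hat\epsilon)$ and all $x_0\in B_{\hat\delta}(y_0)\cap\mathcal{D}$. *)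

From HB Require Import structures.
From mathcomp Require Import all_boot all_order all_algebra.
From mathcomp Require Import all_classical all_reals all_analysis.
Set Implicit Arguments. Unset Strict Implicit. Unset Printing Implicit Defensive.
Import Order.TTheory GRing.Theory Num.Theory.
Import numFieldNormedType.Exports.
Local Open Scope classical_set_scope.
Local Open Scope ring_scope.

(* The library norm on 'rV is the
   max-norm; the paper's balls and distances are Euclidean, so we define the
   Euclidean norm explicitly.  (Topological notions -- open, closure,
   interior, connected, bounded, convergence -- coincide for both norms.) *)

Definition enorm (R : realType) (N : nat) (x : 'rV[R]_N) : R :=
  Num.sqrt (\sum_(i < N) x ord0 i ^+ 2).

Definition eball (R : realType) (N : nat) (c : 'rV[R]_N) (r : R) : set 'rV[R]_N :=
  [set x | enorm (x - c) < r].

Definition bdry (R : realType) (N : nat) (D : set 'rV[R]_N) : set 'rV[R]_N :=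
  closure D `\` D°.

Definition dist_bdry (R : realType) (N : nat) (D : set 'rV[R]_N) (x : 'rV[R]_N) : R :=
  inf [set enorm (x - y) | y in bdry D].

Definition borelN (R : realType) (N : nat) : set (set 'rV[R]_N) :=
  <<s [set A | exists (i : 'I_N) (B : set R), measurable B /\
                 A = (fun x : 'rV[R]_N => x ord0 i) @^-1` B] >>.

(* N-dimensional Lebesgue measure (on Borel sets), by iterated integration
   over the first coordinate (Tonelli). *)
Fixpoint lebN (R : realType) (N : nat) : set 'rV[R]_N -> \bar R :=
  match N with
  | 0 => fun A => if `[< A 0 >] then 1%E else 0%E
  | n.+1 => fun A =>
      (\int[@lebesgue_measure R]_t
         lebN [set y : 'rV[R]_n |
                 A (\row_(j < n.+1) match unlift ord0 j with
                                    | Some k => y ord0 k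
                                    | None => t end)])%E
  end.

Definition unif_ball (R : realType) (N : nat) (A : set 'rV[R]_N) : \bar R :=
  (lebN (A `&` eball 0 1) * (lebN (eball (0 : 'rV[R]_N) 1))^-1)%E.

Definition iid_unif_ball (R : realType) (N : nat) (d : measure_display)
  (T : measurableType d) (P : probability T R) (w : nat -> T -> 'rV[R]_N) : Prop :=
  (forall i (A : set 'rV[R]_N), borelN A -> measurable (w i @^-1` A)) /\
  (forall (n : nat) (A : nat -> set 'rV[R]_N), (forall i, borelN (A i)) ->
     P (\bigcap_(i in `I_n) (w i @^-1` A i)) = (\prod_(i < n) unif_ball (A i))%E).

(* The epsilon-ball walk: X_0 = x, X_{n+1} = X_n + (eps /\ dist(X_n,dD)) w_n
   (the paper's w_{n+1} is our w n). *)
Fixpoint ball_walk (R : realType) (N : nat) (T : Type) (w : nat -> T -> 'rV[R]_N)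
  (D : set 'rV[R]_N) (eps : R) (x : 'rV[R]_N) (om : T) (n : nat) : 'rV[R]_N :=
  match n with
  | 0 => x
  | n.+1 => let p := ball_walk w D eps x om n in
            p + (Num.min eps (dist_bdry D p)) *: w n om
  end.

(* Its a.s. limit X^{eps,x} (set to 0 on the null set where it diverges). *)
Definition walk_limit (R : realType) (N : nat) (T : Type) (w : nat -> T -> 'rV[R]_N)
  (D : set 'rV[R]_N) (eps : R) (x : 'rV[R]_N) (om : T) : 'rV[R]_N :=
  if `[< cvg (ball_walk w D eps x om @ \oo) >]
  then lim (ball_walk w D eps x om @ \oo) else 0.

Definition walk_regular (R : realType) (N : nat) (d : measure_display)
  (T : measurableType d) (P : probability T R) (w : nat -> T -> 'rV[R]_N)
  (D : set 'rV[R]_N) (y0 : 'rV[R]_N) : Prop :=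
  forall eta delta : R, 0 < eta -> 0 < delta ->
  exists dh eh : R, (0 < dh < delta) /\ (0 < eh < 1) /\
    forall (eps : R) (x0 : 'rV[R]_N), 0 < eps < eh -> (eball y0 dh `&` D) x0 ->
      ((1 - eta)%:E <= P [set om | eball y0 delta (walk_limit w D eps x0 om)])%E.

Definition u_walk (R : realType) (N : nat) (d : measure_display)
  (T : measurableType d) (P : probability T R) (w : nat -> T -> 'rV[R]_N)
  (D : set 'rV[R]_N) (F : 'rV[R]_N -> R) (eps : R) (x : 'rV[R]_N) : \bar R :=
  (\int[P]_om (F (walk_limit w D eps x om))%:E)%E.

Definition limsup_near (R : realType) (N : nat) (D : set 'rV[R]_N)
  (u : R -> 'rV[R]_N -> \bar R) (y0 : 'rV[R]_N) : \bar R :=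
  ereal_inf [set ereal_sup [set u eps x | eps in [set e : R | 0 < e < delta] &
                                          x in eball y0 delta `&` D]
            | delta in [set r : R | 0 < r]].

From HB Require Import structures.
From mathcomp Require Import all_boot all_order all_algebra.
From mathcomp Require Import all_classical all_reals all_analysis.
From mathcomp Require Import ring lra.
Import Order.TTheory GRing.Theory Num.Theory.
Import numFieldNormedType.Exports.
Local Open Scope classical_set_scope.
Local Open Scope ring_scope.

(* Failure of walk-regularity gives eta, delta > 0 such that, arbitrarily close
   to y0 and for arbitrarily small eps, the walk ends outside B_delta(y0) with
   probability more than eta.  The boundary datum F y = min(1, |y - y0| / delta)
   is continuous, vanishes at y0 and equals 1 outside B_delta(y0), so at those
   points u^eps >= P(X^{eps,x} outside B_delta(y0)) > eta, and the limsup is at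
   least eta > 0 = F y0.  The technical work is the measurability of that exit
   event: each step of the walk is measurable because dist(., dD) is
   1-Lipschitz, and the convergence set and the limit are measurable by the
   Cauchy criterion. *)

Lemma mul_div_addr1_lt {R : numFieldType} {a e : R} :
  0 <= a -> 0 < e -> a * (e / (a + 1)) < e.
Proof.
move=> a0 e0; rewrite mulrA ltr_pdivrMr ?ltr_wpDl //.
by rewrite mulrDr mulr1 mulrC ltrDl.
Qed.

Lemma ler_dist_min {R : realDomainType} (c u v : R) :
  `|Num.min c u - Num.min c v| <= `|u - v|.
Proof.
have := ler_norm (u - v); have := ler_norm (v - u); rewrite distrC ler_norml.
by case: (lerP c u) => cu; case: (lerP c v) => cv; move=> *; apply/andP; split; lra.
Qed.

Section SumOfSquares.
Context {R : realFieldType} {I : finType}.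
Implicit Types a b : I -> R.

Lemma sum_sqr_ge0 a : 0 <= \sum_i a i ^+ 2.
Proof. by apply: sumr_ge0 => i _; exact: sqr_ge0. Qed.

Lemma cauchy_schwarz_sum a b :
  (\sum_i a i * b i) ^+ 2 <= (\sum_i a i ^+ 2) * (\sum_i b i ^+ 2).
Proof.
set A := \sum_i a i ^+ 2; set B := \sum_i b i ^+ 2; set C := \sum_i a i * b i.
have [B0|] := eqVneq B 0.
  have b0 i : b i = 0.
    apply/eqP; rewrite -sqrf_eq0; apply/eqP.
    exact: (psumr_eq0P (fun i _ => sqr_ge0 (b i)) B0).
  suff -> : C = 0 by rewrite expr0n /= B0 mulr0.
  by rewrite /C big1 // => i _; rewrite b0 mulr0.
rewrite neq_lt ltNge sum_sqr_ge0 /= => B_gt0.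
have : 0 <= \sum_i (a i * B - b i * C) ^+ 2 by exact: sum_sqr_ge0.
have -> : \sum_i (a i * B - b i * C) ^+ 2 = B * (A * B - C ^+ 2).
  rewrite (eq_bigr (fun i => a i ^+ 2 * B ^+ 2 - a i * b i * (2 * B * C)
                             + b i ^+ 2 * C ^+ 2)); last by move=> i _; ring.
  rewrite big_split /= sumrB -!mulr_suml -/A -/B -/C; ring.
by rewrite pmulr_rge0 // subr_ge0.
Qed.

End SumOfSquares.

Section EuclideanNorm.
Context {R : realType} {N : nat}.
Implicit Types x y : 'rV[R]_N.

Lemma enorm_ge0 x : 0 <= enorm x.
Proof. exact: sqrtr_ge0. Qed.

Lemma enorm0 : enorm (0 : 'rV[R]_N) = 0.
Proof. by rewrite /enorm big1 ?sqrtr0 // => i _; rewrite mxE expr0n. Qed.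

Lemma enorm_distC x y : enorm (x - y) = enorm (y - x).
Proof.
by rewrite /enorm; congr Num.sqrt; apply: eq_bigr => i _; rewrite !mxE -sqrrN opprB.
Qed.

Lemma ler_enormD x y : enorm (x + y) <= enorm x + enorm y.
Proof.
rewrite /enorm; set A := \sum_i x ord0 i ^+ 2; set B := \sum_i y ord0 i ^+ 2.
set C := \sum_i x ord0 i * y ord0 i.
have [A0 B0] : 0 <= A /\ 0 <= B by split; exact: sum_sqr_ge0.
have -> : \sum_i (x + y) ord0 i ^+ 2 = A + C *+ 2 + B.
  rewrite (eq_bigr (fun i => x ord0 i ^+ 2 + (x ord0 i * y ord0 i) *+ 2
                             + y ord0 i ^+ 2)); last by move=> i _; rewrite mxE sqrrD.
  by rewrite !big_split.
have C_le : C <= Num.sqrt A * Num.sqrt B.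
  rewrite -sqrtrM // (le_trans (ler_norm C)) // -sqrtr_sqr ler_sqrt ?mulr_ge0 //.
  exact: cauchy_schwarz_sum.
rewrite -[leRHS]ger0_norm ?addr_ge0 ?sqrtr_ge0 // -sqrtr_sqr ler_sqrt ?sqr_ge0 //.
by rewrite sqrrD !sqr_sqrtr // lerD2r lerD2l lerMn2r C_le orbT.
Qed.

Lemma ler_enorm_dist_dist x y : `|enorm x - enorm y| <= enorm (x - y).
Proof.
have := ler_enormD (x - y) y; have := ler_enormD (y - x) x.
rewrite !subrK enorm_distC real_ler_norml ?num_real //; lra.
Qed.

Lemma enorm_le_sum_abs x : enorm x <= \sum_i `|x ord0 i|.
Proof.
rewrite /enorm -[leRHS]ger0_norm ?sumr_ge0 // -sqrtr_sqr ler_sqrt ?sqr_ge0 //.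
suff [] : \sum_i x ord0 i ^+ 2 <= (\sum_i `|x ord0 i|) ^+ 2
          /\ 0 <= \sum_i `|x ord0 i| by [].
elim/big_ind2: _ => [|a1 a2 b1 b2 [le1 ge1] [le2 ge2]|i _].
- by rewrite expr0n.
- by rewrite sqrrD addr_ge0 //; split => //; have := mulr_ge0 ge1 ge2; lra.
- by rewrite real_normK ?num_real.
Qed.

Lemma ler_coord_norm x i : `|x ord0 i| <= `|x|.
Proof.
rewrite [leRHS]/Num.norm /= mx_normrE.
exact: (le_bigmax _ (fun ij : 'I_1 * 'I_N => `|x ij.1 ij.2|) (ord0, i)).
Qed.

Lemma ler_norm_enorm x : `|x| <= enorm x.
Proof.
rewrite [leLHS]/Num.norm /= mx_normrE.
apply/bigmax_leP; split => [|[i j] _ /=]; first exact: enorm_ge0.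
rewrite (ord1 i) /enorm -sqrtr_sqr ler_sqrt ?sum_sqr_ge0 //.
by rewrite (bigD1 j) //= lerDl sumr_ge0 // => k _; exact: sqr_ge0.
Qed.

Lemma ler_enorm_norm x : enorm x <= N%:R * `|x|.
Proof.
apply: (le_trans (enorm_le_sum_abs x)).
rewrite -[N in N%:R]card_ord -sum1_card natr_sum mulr_suml.
by apply: ler_sum => i _; rewrite mul1r ler_coord_norm.
Qed.

End EuclideanNorm.

Section EuclideanConvergence.
Context {R : realType} {N : nat}.

Lemma cvg_enorm_lt {T : Type} {F : set_system T} {FF : Filter F}
    {f : T -> 'rV[R]_N} {L : 'rV[R]_N} :
  f @ F --> L -> forall e, 0 < e -> \forall t \near F, enorm (L - f t) < e.
Proof.
move=> /cvgrPdist_lt fL e e0.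
have N1_gt0 : 0 < N%:R + 1 :> R by rewrite ltr_wpDl.
apply: filterS (fL _ (divr_gt0 e0 N1_gt0)) => t Lt.
apply: le_lt_trans (ler_enorm_norm _) _.
apply: le_lt_trans (ler_wpM2l (ler0n _ N) (ltW Lt)) _.
exact: mul_div_addr1_lt.
Qed.

Lemma enorm_lipschitz_continuous (h : 'rV[R]_N -> R) (K : R) : 0 <= K ->
  (forall x y, `|h x - h y| <= K * enorm (x - y)) -> continuous h.
Proof.
move=> K0 hK x; apply/(cvgrPdist_lt (FF := nbhs_filter x)) => e e0.
have K1_gt0 : 0 < K + 1 by rewrite ltr_wpDl.
have x_cvg : id @ nbhs x --> x := cvg_id.
near=> y; apply: le_lt_trans (hK x y) _.
apply: le_lt_trans _ (mul_div_addr1_lt K0 e0); rewrite ler_wpM2l // ltW //.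
by near: y; apply: (cvg_enorm_lt (FF := nbhs_filter x) x_cvg); rewrite divr_gt0.
Unshelve. all: by end_near.
Qed.

Lemma cvg_enorm_cauchyP (s : nat -> 'rV[R]_N) : cvg (s @ \oo) <->
  forall k : nat, exists M, forall n, (M <= n)%N -> enorm (s n - s M) < k.+1%:R^-1.
Proof.
split => [/cvg_ex[L sL] k | s_cauchy].
  have e_gt0 : 0 < k.+1%:R^-1 / 2 :> R by rewrite divr_gt0.
  have [M _ sML] := cvg_enorm_lt sL _ e_gt0.
  exists M => n Mn; rewrite -(subrKA L).
  apply: le_lt_trans (ler_enormD _ _) _.
  by rewrite (splitr k.+1%:R^-1) ltrD //; [rewrite enorm_distC|]; apply: sML => /=.
apply: cauchy_cvg; apply: cauchy_exP => e e0.
have [k] := ltr_add_invr e0; rewrite add0r => ke.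
have [M sM] := s_cauchy k.
exists (s M), M => // n /= Mn; rewrite -ball_normE /=.
apply: le_lt_trans (ler_norm_enorm _) _.
by rewrite enorm_distC; apply: lt_trans (sM n Mn) ke.
Qed.

Lemma exists_rat_row_enorm_lt (v : 'rV[R]_N) (r : R) : 0 < r ->
  exists q : 'rV[rat]_N, enorm (v - map_mx ratr q) < r.
Proof.
move=> r0; have N1_gt0 : 0 < N%:R + 1 :> R by rewrite ltr_wpDl.
set e := r / (N%:R + 1); have e0 : 0 < e by rewrite divr_gt0.
have /choice[q vq] : forall i, exists qi : rat, `|v ord0 i - ratr qi| < e.
  move=> i; have /rat_in_itvoo[qi] : v ord0 i - e < v ord0 i + e by rewrite ltrD2l gtrN.
  by rewrite in_itv /= => vqi; exists qi; rewrite ltr_distlC.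
exists (\row_i q i); apply: le_lt_trans (enorm_le_sum_abs _) _.
apply: le_lt_trans (mul_div_addr1_lt (ler0n _ N) r0).
rewrite -[N in N%:R * _]card_ord mulr_natl -sumr_const ler_sum // => i _.
by rewrite !mxE ltW.
Qed.

End EuclideanConvergence.

Section CoordinateMeasurability.
Context {d : measure_display} {T : measurableType d} {R : realType} {N : nat}.
Implicit Types p q : T -> 'rV[R]_N.

(* Borel measurability for [borelN], which is generated by the coordinates. *)
Definition measurable_coords p := forall i, measurable_fun setT (fun t => p t ord0 i).

Lemma measurable_coords_cst (v : 'rV[R]_N) : measurable_coords (cst v).
Proof. by move=> i; exact: measurable_cst. Qed.

Lemma measurable_coordsD {p q} : measurable_coords p -> measurable_coords q ->
  measurable_coords (fun t => p t + q t).
Proof.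
by move=> mp mq i; under eq_fun do rewrite mxE; exact: measurable_realfun.measurable_funD.
Qed.

Lemma measurable_coordsB {p q} : measurable_coords p -> measurable_coords q ->
  measurable_coords (fun t => p t - q t).
Proof.
by move=> mp mq i; under eq_fun do rewrite !mxE; exact: measurable_realfun.measurable_funB.
Qed.

Lemma measurable_coordsZ {c : T -> R} {p} : measurable_fun setT c ->
  measurable_coords p -> measurable_coords (fun t => c t *: p t).
Proof.
by move=> mc mp i; under eq_fun do rewrite mxE; exact: measurable_realfun.measurable_funM.
Qed.

Lemma measurable_enorm {p} : measurable_coords p ->
  measurable_fun setT (fun t => enorm (p t)).
Proof.
move=> mp; have msqrt := measurable_realfun.continuous_measurable_fun (@sqrt_continuous R).
apply: measurableT_comp msqrt _; apply: measurable_sum => i.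
exact: measurable_realfun.measurable_funX.
Qed.

Lemma measurable_enorm_lt {p} (c : R) : measurable_coords p ->
  measurable [set t | enorm (p t) < c].
Proof.
move=> mp; have := measurable_enorm mp measurableT _ (measurable_itv `]-oo, c[).
by rewrite setTI; congr measurable; apply/seteqP; split => t /=; rewrite in_itv.
Qed.

Lemma measurable_lipschitz_comp (h : 'rV[R]_N -> R) p :
  (forall x y, h x <= h y + enorm (x - y)) -> measurable_coords p ->
  measurable_fun setT (fun t => h (p t)).
Proof.
move=> hL mp.
apply: (measurability _ (measurable_realfun.RGenOInfty.measurableE R)).
move=> _ [_ [a ->] <-].
(* [{h o p > a}] is the union of the rational balls [B(q, rho)] with [a < h q - rho]. *)
pose ball_set (c : 'rV[rat]_N * rat) :=
  if (0 < ratr c.2 :> R) && (a < h (map_mx ratr c.1) - ratr c.2)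
  then [set t | enorm (p t - map_mx ratr c.1) < ratr c.2] else set0.
have -> : setT `&` (fun t => h (p t)) @^-1` `]a, +oo[ = \bigcup_c ball_set c.
  apply/seteqP; split => t /=.
  - rewrite in_itv /= andbT => -[_ ah].
    have e0 : 0 < (h (p t) - a) / 2 by rewrite divr_gt0 // subr_gt0.
    have [r] := rat_in_itvoo e0; rewrite in_itv /= => /andP[r0 re].
    have [q ptq] := exists_rat_row_enorm_lt (p t) _ r0.
    exists (q, r) => //; rewrite /ball_set /= r0 /= ifT //.
    by move: (hL (p t) (map_mx ratr q)) ptq re; lra.
  - case=> c _; rewrite /ball_set; case: ifP => [/andP[c0 ac] /= ptc|_ []].
    split => //; rewrite in_itv /= andbT.
    by move: (hL (map_mx ratr c.1) (p t)) ac ptc; rewrite enorm_distC; lra.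
apply: countable_bigcupT_measurable; first exact: countableP.
move=> c; rewrite /ball_set; case: ifP => _ //.
exact: measurable_enorm_lt (measurable_coordsB mp (measurable_coords_cst _)).
Qed.

End CoordinateMeasurability.

Section LimitMeasurability.
Context {d : measure_display} {T : measurableType d} {R : realType} {N : nat}.
Variable p : nat -> T -> 'rV[R]_N.
Hypothesis mp : forall n, measurable_coords (p n).

Lemma measurable_cvg_set : measurable [set t | cvg (p ^~ t @ \oo)].
Proof.
have -> : [set t | cvg (p ^~ t @ \oo)] = \bigcap_k \bigcup_M
    \bigcap_(n in [set n | (M <= n)%N]) [set t | enorm (p n t - p M t) < k.+1%:R^-1].
  apply/seteqP; split => t /= tC.
    by move=> k _; have [M tM] := (iffLR (cvg_enorm_cauchyP _) tC) k; exists M.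
  by apply/cvg_enorm_cauchyP => k; have [M _ tM] := tC k I; exists M.
apply: bigcapT_measurable => k; apply: bigcupT_measurable => M.
apply: bigcap_measurableType => n _.
exact: measurable_enorm_lt (measurable_coordsB (mp n) (mp M)).
Qed.

Lemma measurable_coords_lim :
  measurable_coords (fun t => if `[< cvg (p ^~ t @ \oo) >] then lim (p ^~ t @ \oo) else 0).
Proof.
move=> i; under eq_fun do rewrite (fun_if (fun v : 'rV[R]_N => v ord0 i)) mxE.
apply: measurable_fun_if => //.
- apply: (measurable_fun_bool true); rewrite setTI.
  rewrite (_ : _ @^-1` _ = [set t | cvg (p ^~ t @ \oo)]); first exact: measurable_cvg_set.
  by apply/seteqP; split => t /asboolP.
- apply: (measurable_realfun.measurable_fun_cvg (h := fun n t => p n t ord0 i)).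
    by move=> n; apply: measurable_funS (mp n i).
  move=> t [_ /asboolP tC] /=.
  apply: (cvg_comp (p ^~ t) (fun v : 'rV[R]_N => v ord0 i) tC).
  exact: coord_continuous.
Qed.

End LimitMeasurability.

Section Cutoff.
Context {R : realType} {N : nat}.
Variables (y0 : 'rV[R]_N) (r : R).
Hypothesis r_gt0 : 0 < r.

Definition cutoff (y : 'rV[R]_N) : R := Num.min 1 (enorm (y - y0) / r).

Lemma cutoff_ge0 y : 0 <= cutoff y.
Proof. by rewrite le_min ler01 divr_ge0 ?enorm_ge0 ?ltW. Qed.

Lemma cutoff_center : cutoff y0 = 0.
Proof. by rewrite /cutoff subrr enorm0 mul0r; apply/min_idPr/ler01. Qed.

Lemma cutoff_outside y : ~ eball y0 r y -> cutoff y = 1.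
Proof.
move=> /negP; rewrite -leNgt => ry.
by apply/min_idPl; rewrite ler_pdivlMr // mul1r.
Qed.

Lemma cutoff_lipschitz a b : `|cutoff a - cutoff b| <= r^-1 * enorm (a - b).
Proof.
apply: le_trans (ler_dist_min _ _ _) _.
rewrite -mulrBl normrM mulrC gtr0_norm ?invr_gt0 // ler_wpM2l ?invr_ge0 ?(ltW r_gt0) //.
by apply: le_trans (ler_enorm_dist_dist _ _) _; rewrite opprB subrKA.
Qed.

Lemma cutoff_continuous : continuous cutoff.
Proof.
by apply: enorm_lipschitz_continuous cutoff_lipschitz; rewrite invr_ge0 ltW.
Qed.

End Cutoff.

Lemma measure_le_integral {d : measure_display} {T : measurableType d} {R : realType}
    (mu : {measure set T -> \bar R}) (A : set T) (f : T -> R) :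
  measurable A -> measurable_fun setT f -> (forall t, 0 <= f t) ->
  (forall t, A t -> 1 <= f t) -> (mu A <= \int[mu]_t (f t)%:E)%E.
Proof.
move=> mA mf f0 f1; rewrite -[A in mu A]setIT -integral_indic //.
apply: ge0_le_integral => //.
- exact/measurable_realfun.measurable_EFinP/measurable_realfun.measurable_indic.
- exact/measurable_realfun.measurable_EFinP.
- move=> t _; rewrite lee_fin indicE.
  by case: (boolP (t \in A)) => [/set_mem/f1 | _].
Qed.

Lemma iid_unif_ball_measurable_coords {R : realType} {N : nat} {d : measure_display}
    {T : measurableType d} {P : probability T R} {w : nat -> T -> 'rV[R]_N} :
  iid_unif_ball P w -> forall n, measurable_coords (w n).
Proof.
move=> [mw _] n i _ B mB; rewrite setTI.
by apply: (mw n ((fun x : 'rV[R]_N => x ord0 i) @^-1` B)); apply: sub_sigma_algebra; exists i, B.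
Qed.

Section BallWalk.
Context {d : measure_display} {T : measurableType d} {R : realType} {N : nat}.
Context {w : nat -> T -> 'rV[R]_N} {D : set 'rV[R]_N}.

Lemma dist_bdry_lipschitz x y : bdry D !=set0 ->
  dist_bdry D x <= dist_bdry D y + enorm (x - y).
Proof.
move=> [z0 z0D]; rewrite -lerBlDr; apply: lb_le_inf; first by exists (enorm (y - z0)), z0.
move=> _ [z zD <-]; rewrite lerBlDr.
have lb : has_lbound [set enorm (x - z1) | z1 in bdry D].
  by exists 0 => _ [z1 _ <-]; exact: enorm_ge0.
apply: le_trans (ge_inf lb (ex_intro2 _ _ z zD erefl)) _.
by rewrite -(subrKA y) addrC ler_enormD.
Qed.

Hypothesis mw : forall n, measurable_coords (w n).
Hypothesis bdry_neq0 : bdry D !=set0.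

Lemma measurable_coords_ball_walk eps x n :
  measurable_coords (fun t => ball_walk w D eps x t n).
Proof.
elim: n => [|n IH] /=; first exact: measurable_coords_cst.
apply: (measurable_coordsD IH (measurable_coordsZ _ (mw n))).
apply: (measurable_lipschitz_comp (fun v => Num.min eps (dist_bdry D v)) _ _ IH) => a b.
have := dist_bdry_lipschitz a b bdry_neq0; have := enorm_ge0 (a - b).
by case: (lerP eps (dist_bdry D a)); case: (lerP eps (dist_bdry D b)); lra.
Qed.

Lemma measurable_coords_walk_limit eps x :
  measurable_coords (walk_limit w D eps x).
Proof.
exact: (measurable_coords_lim (fun n t => ball_walk w D eps x t n)
          (measurable_coords_ball_walk eps x)).
Qed.

Lemma u_walk_cutoff_ge {P : probability T R} {y0 : 'rV[R]_N} {r eps c : R} {x} :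
  0 < r -> (P [set t | eball y0 r (walk_limit w D eps x t)] < (1 - c)%:E)%E ->
  (c%:E <= u_walk P w D (cutoff y0 r) eps x)%E.
Proof.
move=> r_gt0 P_lt; have mX := measurable_coords_walk_limit eps x.
have mXy0 := measurable_coordsB mX (measurable_coords_cst y0).
set S := [set t | eball y0 r (walk_limit w D eps x t)] in P_lt *.
have mS : measurable S := measurable_enorm_lt r mXy0.
rewrite /u_walk; apply: le_trans (measure_le_integral P (~` S) _ _ _ _ _).
- (* [P] is coerced to a measure differently here and in [probability_setC] *)
  suff : (c%:E <= P (~` S))%E by [].
  rewrite probability_setC // leeBrDl ?fin_num_measure //.
  by rewrite EFinB lteBrDr // in P_lt; exact: ltW.
- exact: measurableC.
- apply: measurable_realfun.measurable_minr => //.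
  by apply: measurable_realfun.measurable_funM => //; exact: measurable_enorm mXy0.
- by move=> t; exact: cutoff_ge0.
- by move=> t /cutoff_outside ->.
Qed.

End BallWalk.

Lemma not_walk_regularP {R : realType} {N : nat} {d : measure_display}
    {T : measurableType d} {P : probability T R} {w : nat -> T -> 'rV[R]_N}
    {D : set 'rV[R]_N} {y0 : 'rV[R]_N} :
  ~ walk_regular P w D y0 -> exists eta delta : R, 0 < eta /\ 0 < delta /\
    forall dh eh : R, 0 < dh < delta -> 0 < eh < 1 -> exists eps x0,
      0 < eps < eh /\ (eball y0 dh `&` D) x0 /\
      (P [set t | eball y0 delta (walk_limit w D eps x0 t)] < (1 - eta)%:E)%E.
Proof.
move=> nreg; apply: contrapT => no_eta; apply: nreg => eta delta eta_gt0 delta_gt0.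
apply: contrapT => no_dh; apply: no_eta; exists eta, delta; split => //; split => //.
move=> dh eh dh_bd eh_bd; apply: contrapT => no_eps; apply: no_dh.
exists dh, eh; split => //; split => // eps x0 eps_bd x0_in.
by rewrite leNgt; apply/negP => P_lt; apply: no_eps; exists eps, x0.
Qed.

Lemma limsup_near_ge {R : realType} {N : nat} (D : set 'rV[R]_N)
    (u : R -> 'rV[R]_N -> \bar R) (y0 : 'rV[R]_N) (a : \bar R) :
  (forall r, 0 < r -> exists eps x, 0 < eps < r /\ (eball y0 r `&` D) x /\ (a <= u eps x)%E) ->
  (a <= limsup_near D u y0)%E.
Proof.
move=> ge_a; apply/ereal_infP => _ [r r_gt0 <-].
have [eps [x [eps_bd [x_in a_le]]]] := ge_a r r_gt0.
by apply: le_trans a_le (ereal_sup_ubound _); exists eps => //; exists x.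
Qed.

Theorem lemma2p15 (R : realType) (N : nat) (d : measure_display)
  (T : measurableType d) (P : probability T R) (w : nat -> T -> 'rV[R]_N)
  (D : set 'rV[R]_N) (y0 : 'rV[R]_N) :
  iid_unif_ball P w ->
  open D -> bounded_set D -> connected D ->
  bdry D y0 ->
  ~ walk_regular P w D y0 ->
  exists F : 'rV[R]_N -> R,
    {within bdry D, continuous F} /\
    limsup_near D (u_walk P w D F) y0 <> (F y0)%:E.
Proof.
move=> iidw _ _ _ y0_bdry nreg.
have bdry_neq0 : bdry D !=set0 by exists y0.
have mw := iid_unif_ball_measurable_coords iidw.
have [eta [delta [eta_gt0 [delta_gt0 escape]]]] := not_walk_regularP nreg.
exists (cutoff y0 delta); split; first exact/continuous_subspaceT/cutoff_continuous.
rewrite cutoff_center => limsup0.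
suff : (eta%:E <= limsup_near D (u_walk P w D (cutoff y0 delta)) y0)%E.
  by rewrite limsup0 lee_fin leNgt eta_gt0.
apply: limsup_near_ge => r r_gt0.
pose s := Num.min r (Num.min delta 1).
have s_gt0 : 0 < s by rewrite !lt_min r_gt0 delta_gt0 ltr01.
have [s_le_r s_le_delta s_le1] : [/\ s <= r, s <= delta & s <= 1].
  by rewrite !ge_min !lexx !orbT.
have dh_bd : 0 < s / 2 < delta by apply/andP; split; lra.
have eh_bd : 0 < s / 2 < 1 by apply/andP; split; lra.
have [eps [x [/andP[eps_gt0 eps_lt] [[x_near Dx] P_lt]]]] := escape _ _ dh_bd eh_bd.
exists eps, x; split; last split.
- by rewrite eps_gt0 /=; lra.
- by split => //; rewrite /eball /= in x_near *; lra.
exact: (u_walk_cutoff_ge mw bdry_neq0 delta_gt0 P_lt).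
Qed.
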